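(* Let $p,l$ be distinct odd primes and let $\Gamma=\psi(\tilde\Gamma)$ be the group described in the context. Then $\Gamma$ is a CSA-group: every maximal abelian subgroup $\Gamma_0$ of $\Gamma$ is malnormal, i.e. $g\Gamma_0g^{-1}\cap\Gamma_0=\{1\}$ for all $g\in\Gamma\setminus\Gamma_0$.
   Context: Let $p,l$ be distinct odd primes. Let $\mathbb H(\mathbb Z)$ be the ring of quaternions $x=x_0+x_1i+x_2j+x_3k$ with $x_0,\dots,x_3\in\mathbb Z$, where $i^2=j^2=k^2=-1$, $ij=-ji=k$; write $|x|^2=x_0^2+x_1^2+x_2^2+x_3^2$. Fix $c_p,d_p\in\mathbb Q_p$ with $c_p^2+d_p^2+1=0$ and $c_l,d_l\in\mathbb Q_l$ with $c_l^2+d_l^2+1=0$. Define $\psi:\mathbb H(\mathbb Z)\setminus\{0\}\to G:=PGL_2(\mathbb Q_p)\times PGL_2(\mathbb Q_l)$ by sending $x$ to the class of the pair $\left(\begin{pmatrix} x_0+x_1c_p+x_3d_p & -x_1d_p+x_2+x_3c_p\\ -x_1d_p-x_2+x_3c_p & x_0-x_1c_p-x_3d_p\end{pmatrix},\begin{pmatrix} x_0+x_1c_l+x_3d_l & -x_1d_l+x_2+x_3c_l\\ -x_1d_l-x_2+x_3c_l & x_0-x_1c_l-x_3d_l\end{pmatrix}\right)$. Let $\tilde\Gamma$ be the set of $x\in\mathbb H(\mathbb Z)$ such that $|x|^2=p^rl^s$ for some integers $r,s\ge 0$, and such that $x_0$ is odd and $x_1,x_2,x_3$ are even if $|x|^2\equiv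 1\pmod 4$, while $x_1$ is even and $x_0,x_2,x_3$ are odd if $|x|^2\equiv 3\pmod 4$. Then $\Gamma=\psi(\tilde\Gamma)$ is a torsion-free cocompact lattice in $G$. *)

From mathcomp Require Import all_boot all_order all_algebra.
Set Implicit Arguments. Unset Strict Implicit. Unset Printing Implicit Defensive.
Import Order.TTheory GRing.Theory Num.Theory.
Local Open Scope ring_scope.

(** Integer quaternions x = x0 + x1 i + x2 j + x3 k. *)
Record quat := Quat { q0 : int; q1 : int; q2 : int; q3 : int }.

Definition qnorm2 (x : quat) : int :=
  q0 x ^+ 2 + q1 x ^+ 2 + q2 x ^+ 2 + q3 x ^+ 2.

Definition in_GammaTilde (p l : nat) (x : quat) : Prop :=
  (exists r s : nat, qnorm2 x = (p ^ r * l ^ s)%N%:Z) /\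
  ((qnorm2 x %% 4)%Z = 1 ->
     ~~ (2 %| q0 x)%Z /\ (2 %| q1 x)%Z /\ (2 %| q2 x)%Z /\ (2 %| q3 x)%Z) /\
  ((qnorm2 x %% 4)%Z = 3 ->
     (2 %| q1 x)%Z /\ ~~ (2 %| q0 x)%Z /\ ~~ (2 %| q2 x)%Z /\ ~~ (2 %| q3 x)%Z).

Definition mx2 (K : fieldType) (a b c d : K) : 'M[K]_2 :=
  \matrix_(i < 2, j < 2)
    if (i : nat) == 0%N then (if (j : nat) == 0%N then a else b)
    else (if (j : nat) == 0%N then c else d).

(** One component of psi, with parameters c, d (c^2 + d^2 + 1 = 0). *)
Definition psi_comp (K : fieldType) (c d : K) (x : quat) : 'M[K]_2 :=
  let x0 : K := (q0 x)%:~R in let x1 : K := (q1 x)%:~R in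
  let x2 : K := (q2 x)%:~R in let x3 : K := (q3 x)%:~R in
  mx2 (x0 + x1 * c + x3 * d) (- (x1 * d) + x2 + x3 * c)
      (- (x1 * d) - x2 + x3 * c) (x0 - x1 * c - x3 * d).

(** Representatives of elements of G = PGL_2(Kp) x PGL_2(Kl):
    pairs of (invertible) matrices, considered up to scalars. *)
Definition Grep (Kp Kl : fieldType) := ('M[Kp]_2 * 'M[Kl]_2)%type.

Definition Geq (Kp Kl : fieldType) (g h : Grep Kp Kl) : Prop :=
  exists (a : Kp) (b : Kl), a != 0 /\ b != 0 /\
    g.1 = a *: h.1 /\ g.2 = b *: h.2.

Definition Gmul (Kp Kl : fieldType) (g h : Grep Kp Kl) : Grep Kp Kl :=
  (g.1 *m h.1, g.2 *m h.2).

Definition Ginv (Kp Kl : fieldType) (g : Grep Kp Kl) : Grep Kp Kl :=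
  (invmx g.1, invmx g.2).

Definition Gone (Kp Kl : fieldType) : Grep Kp Kl := (1%:M, 1%:M).

Definition psi (Kp Kl : fieldType) (cp dp : Kp) (cl dl : Kl) (x : quat)
  : Grep Kp Kl := (psi_comp cp dp x, psi_comp cl dl x).

Definition in_Gamma (p l : nat) (Kp Kl : fieldType) (cp dp : Kp) (cl dl : Kl)
  (g : Grep Kp Kl) : Prop :=
  exists x : quat, in_GammaTilde p l x /\ Geq g (psi cp dp cl dl x).

Definition is_subgroup_in (Kp Kl : fieldType)
  (S H : Grep Kp Kl -> Prop) : Prop :=
  (forall g h, Geq g h -> H h -> H g) /\
  (forall g, H g -> S g) /\
  H (Gone Kp Kl) /\
  (forall g h, H g -> H h -> H (Gmul g h)) /\
  (forall g, H g -> H (Ginv g)).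

Definition is_abelian (Kp Kl : fieldType) (H : Grep Kp Kl -> Prop) : Prop :=
  forall g h, H g -> H h -> Geq (Gmul g h) (Gmul h g).

Definition max_abelian_subgroup (Kp Kl : fieldType)
  (S H : Grep Kp Kl -> Prop) : Prop :=
  is_subgroup_in S H /\ is_abelian H /\
  forall H', is_subgroup_in S H' -> is_abelian H' ->
    (forall g, H g -> H' g) -> forall g, H' g -> H g.

Definition malnormal_in (Kp Kl : fieldType)
  (S H : Grep Kp Kl -> Prop) : Prop :=
  forall g, S g -> ~ H g ->
    forall h, H h -> H (Gmul (Gmul g h) (Ginv g)) ->
      Geq (Gmul (Gmul g h) (Ginv g)) (Gone Kp Kl).

Definition is_CSA (Kp Kl : fieldType) (S : Grep Kp Kl -> Prop) : Prop :=
  forall H, max_abelian_subgroup S H -> malnormal_in S H.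

From mathcomp Require Import all_boot all_order all_algebra.
From mathcomp Require Import ring zify.
Import Order.TTheory GRing.Theory Num.Theory.
Set Implicit Arguments. Unset Strict Implicit.
Local Open Scope ring_scope.

(* Every element of Gamma is psi(x) for a quaternion x with odd real part x0.
   psi is multiplicative, and psi(u) is a scalar multiple of psi(w) only when
   u and w are proportional; hence psi(x) and psi(w) commute only when the
   vector parts of x and w are parallel (this is where x0 <> 0 is used).
   Let k = g h g^-1 and h lie in a maximal abelian subgroup H, and k = psi(z).
   If z is real then k = 1.  Otherwise the psi(x) with x parallel to z form an
   abelian subgroup containing H, hence equal to H.  Writing g = psi(x) and
   h = psi(y), psi(x y) is proportional to psi(z x), so the vector part of
   x^* z x is parallel to z; as x0 <> 0 this forces x to be parallel to z,
   i.e. g lies in H. *)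

Definition qmul (x y : quat) : quat :=
  Quat (q0 x * q0 y - q1 x * q1 y - q2 x * q2 y - q3 x * q3 y)
       (q0 x * q1 y + q1 x * q0 y + q2 x * q3 y - q3 x * q2 y)
       (q0 x * q2 y - q1 x * q3 y + q2 x * q0 y + q3 x * q1 y)
       (q0 x * q3 y + q1 x * q2 y - q2 x * q1 y + q3 x * q0 y).

Definition qconj (x : quat) : quat := Quat (q0 x) (- q1 x) (- q2 x) (- q3 x).

Definition qscal (n : int) : quat := Quat n 0 0 0.

Definition qdot (x y : quat) : int :=
  q0 x * q0 y + q1 x * q1 y + q2 x * q2 y + q3 x * q3 y.

Definition vdot (x y : quat) : int := q1 x * q1 y + q2 x * q2 y + q3 x * q3 y.

Definition vcross1 (x y : quat) : int := q2 x * q3 y - q3 x * q2 y.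
Definition vcross2 (x y : quat) : int := q3 x * q1 y - q1 x * q3 y.
Definition vcross3 (x y : quat) : int := q1 x * q2 y - q2 x * q1 y.

Definition parallel (x y : quat) : Prop :=
  [/\ vcross1 x y = 0, vcross2 x y = 0 & vcross3 x y = 0].

Definition real_quat (x : quat) : bool := [&& q1 x == 0, q2 x == 0 & q3 x == 0].

Lemma qnorm2_mul x y : qnorm2 (qmul x y) = qnorm2 x * qnorm2 y.
Proof. by rewrite /qnorm2 /qmul /=; ring. Qed.

Lemma qnorm2_conj x : qnorm2 (qconj x) = qnorm2 x.
Proof. by rewrite /qnorm2 /qconj /=; ring. Qed.

Lemma qmul_conj x : qmul x (qconj x) = qscal (qnorm2 x).
Proof. by rewrite /qmul /qconj /qnorm2 /qscal /=; congr Quat; ring. Qed.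

Lemma qdot_mull x u v : qdot (qmul x u) (qmul x v) = qnorm2 x * qdot u v.
Proof. by rewrite /qdot /qmul /qnorm2 /=; ring. Qed.

Lemma qdot_conjl x u v : qdot (qmul (qconj x) u) v = qdot u (qmul x v).
Proof. by rewrite /qdot /qmul /qconj /=; ring. Qed.

Lemma sum3_sqr_eq0 (a b c : int) :
  a * a + b * b + c * c = 0 -> [/\ a = 0, b = 0 & c = 0].
Proof. by move=> h; split; nia. Qed.

Lemma vdot_self_neq0 x : ~~ real_quat x -> vdot x x != 0.
Proof.
by rewrite /real_quat; apply: contraNN => /eqP/sum3_sqr_eq0[-> -> ->]; rewrite !eqxx.
Qed.

Lemma parallelE x z : parallel x z <->
  [/\ qdot x (Quat 0 0 (q3 z) (- q2 z)) = 0, qdot x (Quat 0 (- q3 z) 0 (q1 z)) = 0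
    & qdot x (Quat 0 (q2 z) (- q1 z) 0) = 0].
Proof.
have -> : qdot x (Quat 0 0 (q3 z) (- q2 z)) = vcross1 x z by rewrite /qdot /vcross1 /=; ring.
have -> : qdot x (Quat 0 (- q3 z) 0 (q1 z)) = vcross2 x z by rewrite /qdot /vcross2 /=; ring.
by have -> : qdot x (Quat 0 (q2 z) (- q1 z) 0) = vcross3 x z by rewrite /qdot /vcross3 /=; ring.
Qed.

Lemma parallel_sym x y : parallel x y -> parallel y x.
Proof. by rewrite /parallel /vcross1 /vcross2 /vcross3 => -[h1 h2 h3]; split; lia. Qed.

Lemma parallel_proj x z : parallel x z ->
  [/\ vdot z z * q1 x = vdot x z * q1 z, vdot z z * q2 x = vdot x z * q2 z
    & vdot z z * q3 x = vdot x z * q3 z].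
Proof.
case: x => x0 x1 x2 x3; case: z => z0 z1 z2 z3.
rewrite /parallel /vcross1 /vcross2 /vcross3 /vdot /= => -[h1 h2 h3]; split.
- have -> : (z1 * z1 + z2 * z2 + z3 * z3) * x1 = (x1 * z1 + x2 * z2 + x3 * z3) * z1
     + (z2 * (x1 * z2 - x2 * z1) - z3 * (x3 * z1 - x1 * z3)) by ring.
  by rewrite h2 h3; ring.
- have -> : (z1 * z1 + z2 * z2 + z3 * z3) * x2 = (x1 * z1 + x2 * z2 + x3 * z3) * z2
     + (z3 * (x2 * z3 - x3 * z2) - z1 * (x1 * z2 - x2 * z1)) by ring.
  by rewrite h1 h3; ring.
- have -> : (z1 * z1 + z2 * z2 + z3 * z3) * x3 = (x1 * z1 + x2 * z2 + x3 * z3) * z3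
     + (z1 * (x3 * z1 - x1 * z3) - z2 * (x2 * z3 - x3 * z2)) by ring.
  by rewrite h1 h2; ring.
Qed.

Lemma parallel_trans y x z : ~~ real_quat y ->
  parallel x y -> parallel y z -> parallel x z.
Proof.
move=> ny /parallel_proj[a1 a2 a3] /parallel_sym/parallel_proj[b1 b2 b3].
have N0 := vdot_self_neq0 ny; set N := vdot y y in N0 a1 a2 a3 b1 b2 b3.
have NN0 (e : int) : N * N * e = 0 -> e = 0.
  by move/eqP; rewrite !mulf_eq0 (negbTE N0) => /eqP.
split; apply: NN0.
- have -> : N * N * vcross1 x z = (N * q2 x) * (N * q3 z) - (N * q3 x) * (N * q2 z).
    by rewrite /vcross1; ring.
  by rewrite a2 a3 b2 b3; ring.
- have -> : N * N * vcross2 x z = (N * q3 x) * (N * q1 z) - (N * q1 x) * (N * q3 z).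
    by rewrite /vcross2; ring.
  by rewrite a1 a3 b1 b3; ring.
- have -> : N * N * vcross3 x z = (N * q1 x) * (N * q2 z) - (N * q2 x) * (N * q1 z).
    by rewrite /vcross3; ring.
  by rewrite a1 a2 b1 b2; ring.
Qed.

Lemma qmulC_parallel x y : parallel x y -> qmul x y = qmul y x.
Proof.
case: x => x0 x1 x2 x3; case: y => y0 y1 y2 y3.
by rewrite /parallel /vcross1 /vcross2 /vcross3 /qmul /= => -[h1 h2 h3]; congr Quat; lia.
Qed.

Lemma parallel_qscal n z : parallel (qscal n) z.
Proof. by rewrite /parallel /vcross1 /vcross2 /vcross3 /qscal /=; split; ring. Qed.

Lemma parallel_conj x z : parallel x z -> parallel (qconj x) z.
Proof. by rewrite /parallel /vcross1 /vcross2 /vcross3 /qconj /= => -[h1 h2 h3]; split; lia. Qed.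

Lemma parallel_mul x y z : ~~ real_quat z ->
  parallel x z -> parallel y z -> parallel (qmul x y) z.
Proof.
move=> nz hx hy; have [c1 c2 c3] := parallel_trans nz hx (parallel_sym hy).
move: hx hy c1 c2 c3 {nz}.
case: x => x0 x1 x2 x3; case: y => y0 y1 y2 y3; case: z => z0 z1 z2 z3.
rewrite /parallel /vcross1 /vcross2 /vcross3 /qmul /= => -[h1 h2 h3] [k1 k2 k3] c1 c2 c3.
split.
- have -> : (x0 * y2 - x1 * y3 + x2 * y0 + x3 * y1) * z3 - (x0 * y3 + x1 * y2 - x2 * y1 + x3 * y0) * z2
    = x0 * (y2 * z3 - y3 * z2) + y0 * (x2 * z3 - x3 * z2) + (x3 * y1 - x1 * y3) * z3 - (x1 * y2 - x2 * y1) * z2 by ring.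
  by rewrite h1 k1 c2 c3; ring.
- have -> : (x0 * y3 + x1 * y2 - x2 * y1 + x3 * y0) * z1 - (x0 * y1 + x1 * y0 + x2 * y3 - x3 * y2) * z3
    = x0 * (y3 * z1 - y1 * z3) + y0 * (x3 * z1 - x1 * z3) + (x1 * y2 - x2 * y1) * z1 - (x2 * y3 - x3 * y2) * z3 by ring.
  by rewrite h2 k2 c1 c3; ring.
- have -> : (x0 * y1 + x1 * y0 + x2 * y3 - x3 * y2) * z2 - (x0 * y2 - x1 * y3 + x2 * y0 + x3 * y1) * z1
    = x0 * (y1 * z2 - y2 * z1) + y0 * (x1 * z2 - x2 * z1) + (x2 * y3 - x3 * y2) * z2 - (x3 * y1 - x1 * y3) * z1 by ring.
  by rewrite h3 k3 c1 c2; ring.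
Qed.

Lemma parallel_of_conj_parallel x z : q0 x != 0 -> ~~ real_quat z ->
  parallel (qmul (qconj x) (qmul z x)) z -> parallel x z.
Proof.
move=> x0n nz; have nZ0 := vdot_self_neq0 nz.
move: x0n nz nZ0; case: x => x0 x1 x2 x3; case: z => z0 z1 z2 z3.
rewrite /parallel /vcross1 /vcross2 /vcross3 /qmul /qconj /vdot /= => x0n _ nZ0 [e1 e2 e3].
set d := x1 * z1 + x2 * z2 + x3 * z3.
set nZ := z1 * z1 + z2 * z2 + z3 * z3 in nZ0.
set C1 := x2 * z3 - x3 * z2; set C2 := x3 * z1 - x1 * z3; set C3 := x1 * z2 - x2 * z1.
have E1 : 2 * d * C1 - 2 * x0 * (d * z1 - nZ * x1) = 0 by rewrite -e1 /d /C1 /nZ; ring.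
have E2 : 2 * d * C2 - 2 * x0 * (d * z2 - nZ * x2) = 0 by rewrite -e2 /d /C2 /nZ; ring.
have E3 : 2 * d * C3 - 2 * x0 * (d * z3 - nZ * x3) = 0 by rewrite -e3 /d /C3 /nZ; ring.
(* [d z - nZ x] is orthogonal to [C = x /\ z], so pairing the E_i with C kills the x0 terms. *)
have hd : 2 * d * (C1 * C1 + C2 * C2 + C3 * C3) = 0.
  have -> : 2 * d * (C1 * C1 + C2 * C2 + C3 * C3) =
    (2 * d * C1 - 2 * x0 * (d * z1 - nZ * x1)) * C1 +
    (2 * d * C2 - 2 * x0 * (d * z2 - nZ * x2)) * C2 +
    (2 * d * C3 - 2 * x0 * (d * z3 - nZ * x3)) * C3 by rewrite /C1 /C2 /C3 /d /nZ; ring.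
  by rewrite E1 E2 E3; ring.
move/eqP: hd; rewrite !mulf_eq0 /= => /orP[/eqP d0|/eqP/sum3_sqr_eq0[]//].
have x0nZ (t : int) : 2 * x0 * nZ * t = 0 -> t = 0.
  by move/eqP; rewrite !mulf_eq0 (negbTE x0n) (negbTE nZ0) => /eqP.
have X1 : x1 = 0 by apply: x0nZ; rewrite -E1 d0; ring.
have X2 : x2 = 0 by apply: x0nZ; rewrite -E2 d0; ring.
have X3 : x3 = 0 by apply: x0nZ; rewrite -E3 d0; ring.
by rewrite /C1 /C2 /C3 X1 X2 X3; split; ring.
Qed.

(* [x = 1] and [x = 1 + j + k] modulo 2: the two parity patterns allowed in \tilde\Gamma. *)
Definition congr1_mod2 (x : quat) : Prop :=
  ~~ (2 %| q0 x)%Z /\ (2 %| q1 x)%Z /\ (2 %| q2 x)%Z /\ (2 %| q3 x)%Z.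
Definition congr1jk_mod2 (x : quat) : Prop :=
  (2 %| q1 x)%Z /\ ~~ (2 %| q0 x)%Z /\ ~~ (2 %| q2 x)%Z /\ ~~ (2 %| q3 x)%Z.
Definition admissible (x : quat) : Prop := congr1_mod2 x \/ congr1jk_mod2 x.

Lemma oddzW (a : int) : ~~ (2 %| a)%Z -> exists k, a = 2 * k + 1.
Proof. by move=> h; exists (a %/ 2)%Z; lia. Qed.

Lemma evenzW (a : int) : (2 %| a)%Z -> exists k, a = 2 * k.
Proof. by move=> h; exists (a %/ 2)%Z; lia. Qed.

Lemma admissible_qnorm2_mod4 x : admissible x ->
  ((qnorm2 x %% 4)%Z = 1 -> congr1_mod2 x) /\
  ((qnorm2 x %% 4)%Z = 3 -> congr1jk_mod2 x).
Proof.
case: x => x0 x1 x2 x3; rewrite /admissible /congr1_mod2 /congr1jk_mod2 /qnorm2 /=.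
case=> [[/oddzW[a ->] [/evenzW[b ->] [/evenzW[c ->] /evenzW[e ->]]]]|
        [/evenzW[b ->] [/oddzW[a ->] [/oddzW[c ->] /oddzW[e ->]]]]].
- split=> h; first by split; [lia|split; [lia|split; lia]].
  by exfalso; move: h; lia.
- split=> h; last by split; [lia|split; [lia|split; lia]].
  by exfalso; move: h; lia.
Qed.

Lemma admissible_q0_neq0 x : admissible x -> q0 x != 0.
Proof. by case=> [[h _]|[_ [h _]]]; apply: contraNneq h => ->. Qed.

Lemma admissible_conj x : admissible x -> admissible (qconj x).
Proof.
case: x => x0 x1 x2 x3; rewrite /admissible /congr1_mod2 /congr1jk_mod2 /qconj /=.
by case=> [[h0 [h1 [h2 h3]]]|[h1 [h0 [h2 h3]]]]; [left|right];
  split; try split; try split; lia.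
Qed.

Lemma admissible_mul x y : admissible x -> admissible y -> admissible (qmul x y).
Proof.
case: x => x0 x1 x2 x3; case: y => y0 y1 y2 y3.
rewrite /admissible /congr1_mod2 /congr1jk_mod2 /qmul /=.
case=> [[/oddzW[a0 ->] [/evenzW[a1 ->] [/evenzW[a2 ->] /evenzW[a3 ->]]]]|
        [/evenzW[a1 ->] [/oddzW[a0 ->] [/oddzW[a2 ->] /oddzW[a3 ->]]]]];
case=> [[/oddzW[b0 ->] [/evenzW[b1 ->] [/evenzW[b2 ->] /evenzW[b3 ->]]]]|
        [/evenzW[b1 ->] [/oddzW[b0 ->] [/oddzW[b2 ->] /oddzW[b3 ->]]]]];
by first [left; split; [lia|split; [lia|split; lia]]
         |right; split; [lia|split; [lia|split; lia]]].
Qed.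

Section GammaTilde.
Variables (p l : nat).

Lemma GammaTilde_admissible x : odd p -> odd l -> in_GammaTilde p l x -> admissible x.
Proof.
move=> op ol [[r [s e]] [c1 c3]].
have od : odd (p ^ r * l ^ s) by rewrite oddM !oddX op ol !orbT.
have : ((qnorm2 x) %% 4)%Z = 1 \/ ((qnorm2 x) %% 4)%Z = 3 by rewrite e; lia.
by case=> h; [left; apply: c1|right; apply: c3].
Qed.

Lemma GammaTilde_qnorm2_neq0 x : (0 < p)%N -> (0 < l)%N ->
  in_GammaTilde p l x -> qnorm2 x != 0.
Proof.
by move=> p0 l0 [[r [s ->]] _]; rewrite eqz_nat -lt0n muln_gt0 !expn_gt0 p0 l0.
Qed.

Lemma GammaTilde_of_admissible x : admissible x ->
  (exists r s : nat, qnorm2 x = (p ^ r * l ^ s)%N%:Z) -> in_GammaTilde p l x.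
Proof. by move=> ax nx; split=> //; apply: admissible_qnorm2_mod4. Qed.

Lemma GammaTilde_one : in_GammaTilde p l (qscal 1).
Proof.
apply: GammaTilde_of_admissible; last by exists 0%N, 0%N.
by left; rewrite /congr1_mod2 /qscal /=.
Qed.

Hypotheses (op : odd p) (ol : odd l).

Lemma GammaTilde_mul x y : in_GammaTilde p l x -> in_GammaTilde p l y ->
  in_GammaTilde p l (qmul x y).
Proof.
move=> hx hy; apply: GammaTilde_of_admissible.
  by apply: admissible_mul; apply: GammaTilde_admissible.
case: hx hy => [[r1 [s1 e1]] _] [[r2 [s2 e2]] _].
exists (r1 + r2)%N, (s1 + s2)%N; rewrite qnorm2_mul e1 e2 -PoszM.
by rewrite !expnD mulnACA.
Qed.

Lemma GammaTilde_conj x : in_GammaTilde p l x -> in_GammaTilde p l (qconj x).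
Proof.
move=> hx; apply: GammaTilde_of_admissible.
  by apply: admissible_conj; apply: GammaTilde_admissible.
by case: hx => [[r [s e]] _]; exists r, s; rewrite qnorm2_conj.
Qed.

End GammaTilde.

Section PsiComp.
Variables (K : fieldType) (c d : K).
Hypothesis hcd : c ^+ 2 + d ^+ 2 + 1 = 0.

Local Notation ir := (fun n : int => (n%:~R : K)).

Lemma eq_mod_hcd (a b q : K) : a - b = (c ^+ 2 + d ^+ 2 + 1) * q -> a = b.
Proof. by rewrite hcd mul0r => /eqP; rewrite subr_eq0 => /eqP. Qed.

Lemma psi_comp_qscal n : psi_comp c d (qscal n) = n%:~R *: 1%:M.
Proof.
apply/matrixP => i j; rewrite !mxE.
by case: i => [[|[|i]] hi] //; case: j => [[|[|j]] hj] //=; ring.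
Qed.

Lemma psi_comp_mul x y :
  psi_comp c d (qmul x y) = psi_comp c d x *m psi_comp c d y.
Proof.
apply/matrixP => i j; rewrite !mxE !big_ord_recr big_ord0 /= !mxE.
case: x => x0 x1 x2 x3; case: y => y0 y1 y2 y3.
rewrite /qmul /= !(intrD, intrB, intrM, intrN).
case: i => [[|[|i]] hi] //; case: j => [[|[|j]] hj] //=.
- by apply: (eq_mod_hcd (q := - (x1%:~R * y1%:~R + x3%:~R * y3%:~R))); ring.
- by apply: (eq_mod_hcd (q := x3%:~R * y1%:~R - x1%:~R * y3%:~R)); ring.
- by apply: (eq_mod_hcd (q := x1%:~R * y3%:~R - x3%:~R * y1%:~R)); ring.
- by apply: (eq_mod_hcd (q := - (x1%:~R * y1%:~R + x3%:~R * y3%:~R))); ring.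
Qed.

Lemma psi_comp_mulV x : ir (qnorm2 x) != 0 ->
  psi_comp c d x *m ((ir (qnorm2 x))^-1 *: psi_comp c d (qconj x)) = 1%:M.
Proof.
move=> N0; rewrite -scalemxAr -psi_comp_mul qmul_conj psi_comp_qscal.
by rewrite scalerA mulVf // scale1r.
Qed.

Lemma psi_comp_unit x : ir (qnorm2 x) != 0 -> psi_comp c d x \in unitmx.
Proof. by move=> N0; have [] := mulmx1_unit (psi_comp_mulV N0). Qed.

Lemma invmx_psi_comp x : ir (qnorm2 x) != 0 ->
  invmx (psi_comp c d x) = (ir (qnorm2 x))^-1 *: psi_comp c d (qconj x).
Proof.
move=> N0; rewrite -[LHS]mulmx1 -(psi_comp_mulV N0) mulmxA.
by rewrite mulVmx ?mul1mx ?psi_comp_unit.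
Qed.

Lemma psi_comp_coords x (A := psi_comp c d x) :
  [/\ 2 * ir (q0 x) = A ord0 ord0 + A ord_max ord_max,
      2 * ir (q1 x) = d * (A ord0 ord_max + A ord_max ord0) - c * (A ord0 ord0 - A ord_max ord_max),
      2 * ir (q2 x) = A ord0 ord_max - A ord_max ord0
    & 2 * ir (q3 x) = - (d * (A ord0 ord0 - A ord_max ord_max) + c * (A ord0 ord_max + A ord_max ord0))].
Proof.
rewrite /A !mxE /=; split; try ring.
- by apply: (eq_mod_hcd (q := 2 * ir (q1 x))); ring.
- by apply: (eq_mod_hcd (q := 2 * ir (q3 x))); ring.
Qed.

Hypothesis two_neq0 : (2 : K) != 0.

Lemma psi_comp_scaled u w a : psi_comp c d u = a *: psi_comp c d w ->
  [/\ ir (q0 u) = a * ir (q0 w), ir (q1 u) = a * ir (q1 w),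
      ir (q2 u) = a * ir (q2 w) & ir (q3 u) = a * ir (q3 w)].
Proof.
move=> e; have [u0 u1 u2 u3] := psi_comp_coords u.
have [w0 w1 w2 w3] := psi_comp_coords w.
move: u0 u1 u2 u3 w0 w1 w2 w3; rewrite e; move: (psi_comp c d w) => W.
rewrite !mxE => u0 u1 u2 u3 w0 w1 w2 w3.
split; apply: (mulfI two_neq0); rewrite mulrCA.
- by rewrite u0 w0; ring.
- by rewrite u1 w1; ring.
- by rewrite u2 w2; ring.
- by rewrite u3 w3; ring.
Qed.

Lemma psi_comp_scaled_qdot u w a : psi_comp c d u = a *: psi_comp c d w ->
  forall r, ir (qdot u r) = a * ir (qdot w r).
Proof.
move=> /psi_comp_scaled[e0 e1 e2 e3] r.
by rewrite /qdot !(intrD, intrM) e0 e1 e2 e3; ring.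
Qed.

End PsiComp.

Section PsiCompChar0.
Variables (K : fieldType) (c d : K).
Hypotheses (hK : [pchar K] =i pred0) (hcd : c ^+ 2 + d ^+ 2 + 1 = 0).

Local Notation ir := (fun n : int => (n%:~R : K)).

Lemma intr_eq0_pchar0 (n : int) : (ir n == 0) = (n == 0).
Proof.
have natr_eq0 := (pcharf0P K).1 hK.
by case: n => m; rewrite ?NegzE ?intrN ?oppr_eq0 -?[_%:~R]/(_%:R) natr_eq0.
Qed.

Lemma two_neq0_pchar0 : (2 : K) != 0.
Proof. by rewrite (intr_eq0_pchar0 2). Qed.

Lemma parallel_of_psi_comm z w b : q0 z != 0 ->
  psi_comp c d (qmul z w) = b *: psi_comp c d (qmul w z) -> parallel z w.
Proof.
move=> z0 e; have scaled := psi_comp_scaled_qdot hcd two_neq0_pchar0 e.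
(* the vector parts of [zw] and [wz] are [P + Q] and [P - Q], with [P . Q = 0] *)
pose Q := Quat 0 (vcross1 z w) (vcross2 z w) (vcross3 z w).
pose P := Quat 0 (q0 z * q1 w + q0 w * q1 z) (q0 z * q2 w + q0 w * q2 z)
                 (q0 z * q3 w + q0 w * q3 z).
have hQ : ir (vdot Q Q) = b * ir (- vdot Q Q).
  have := scaled Q; congr (ir _ = b * ir _);
    by rewrite /qdot /vdot /qmul /= /vcross1 /vcross2 /vcross3; ring.
have hP : ir (vdot P P) = b * ir (vdot P P).
  have := scaled P; congr (ir _ = b * ir _); by rewrite /qdot /vdot /qmul /=; ring.
have /eqP : 2 * ir (vdot Q Q * vdot P P) = 0.
  rewrite intrM; transitivity
    (ir (vdot Q Q) * (b * ir (vdot P P)) + b * ir (- vdot Q Q) * ir (vdot P P)).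
    by rewrite -hQ -hP; ring.
  by rewrite intrN; ring.
rewrite mulf_eq0 (negbTE two_neq0_pchar0) intr_eq0_pchar0 mulf_eq0 /=.
case/orP=> /eqP; rewrite /vdot /= => /sum3_sqr_eq0[h1 h2 h3]; first by split.
have z0I (t : int) : q0 z * t = 0 -> t = 0.
  by move/eqP; rewrite mulf_eq0 (negbTE z0) => /eqP.
split; apply: z0I.
- transitivity (q2 z * (q0 z * q3 w + q0 w * q3 z) - q3 z * (q0 z * q2 w + q0 w * q2 z)).
    by rewrite /vcross1; ring.
  by rewrite h2 h3; ring.
- transitivity (q3 z * (q0 z * q1 w + q0 w * q1 z) - q1 z * (q0 z * q3 w + q0 w * q3 z)).
    by rewrite /vcross2; ring.
  by rewrite h1 h3; ring.
- transitivity (q1 z * (q0 z * q2 w + q0 w * q2 z) - q2 z * (q0 z * q1 w + q0 w * q1 z)).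
    by rewrite /vcross3; ring.
  by rewrite h1 h2; ring.
Qed.

Lemma parallel_of_psi_conj x y z a : q0 x != 0 -> a != 0 -> ~~ real_quat z ->
  parallel y z -> psi_comp c d (qmul x y) = a *: psi_comp c d (qmul z x) ->
  parallel x z.
Proof.
move=> x0 a0 nz /parallelE[y1 y2 y3] e.
apply: parallel_of_conj_parallel => //; apply/parallelE.
(* pairing both sides with [x v] gives [|x|^2 (y . v)] and [(x^* z x) . v] *)
have orth v : qdot y v = 0 -> qdot (qmul (qconj x) (qmul z x)) v = 0.
  move=> yv; have := psi_comp_scaled_qdot hcd two_neq0_pchar0 e (qmul x v).
  rewrite qdot_mull yv mulr0 mulr0z qdot_conjl => /esym/eqP.
  by rewrite mulf_eq0 (negbTE a0) intr_eq0_pchar0 => /eqP.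
by split; apply: orth.
Qed.

End PsiCompChar0.

Lemma real_quatE x : real_quat x -> x = qscal (q0 x).
Proof. by case: x => x0 x1 x2 x3 /and3P[/= /eqP-> /eqP-> /eqP->]. Qed.

Lemma scaler_eq_div (K : fieldType) (V : lmodType K) (a b : K) (A B : V) :
  a != 0 -> a *: A = b *: B -> A = (a^-1 * b) *: B.
Proof. by move=> a0 e; rewrite -scalerA -e scalerA mulVf // scale1r. Qed.

Lemma scalemx_mul (R : comPzRingType) m n k (a b : R)
    (A : 'M[R]_(m, n)) (B : 'M[R]_(n, k)) :
  (a *: A) *m (b *: B) = (a * b) *: (A *m B).
Proof. by rewrite -scalemxAl -scalemxAr scalerA. Qed.

Section Geq.
Variables Kp Kl : fieldType.
Implicit Types g h : Grep Kp Kl.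

Lemma Geq_sym g h : Geq g h -> Geq h g.
Proof.
case=> a [b [a0 [b0 [e1 e2]]]]; exists a^-1, b^-1.
by rewrite !invr_eq0 a0 b0 e1 e2 !scalerA !mulVf // !scale1r.
Qed.

Lemma Geq_trans g h k : Geq g h -> Geq h k -> Geq g k.
Proof.
case=> a [b [a0 [b0 [e1 e2]]]] [a' [b' [a0' [b0' [e1' e2']]]]].
by exists (a * a'), (b * b'); rewrite !mulf_neq0 // e1 e2 e1' e2' !scalerA.
Qed.

Lemma Geq_mul g g' h h' : Geq g g' -> Geq h h' -> Geq (Gmul g h) (Gmul g' h').
Proof.
case=> a [b [a0 [b0 [e1 e2]]]] [a' [b' [a0' [b0' [e1' e2']]]]].
exists (a * a'), (b * b'); rewrite !mulf_neq0 //.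
by rewrite /Gmul /= e1 e2 e1' e2' !scalemx_mul.
Qed.

End Geq.

Section PsiGamma.
Context {Kp Kl : fieldType} {cp dp : Kp} {cl dl : Kl}.
Hypotheses (hKp : [pchar Kp] =i pred0) (hKl : [pchar Kl] =i pred0).
Hypotheses (hp : cp ^+ 2 + dp ^+ 2 + 1 = 0) (hl : cl ^+ 2 + dl ^+ 2 + 1 = 0).

Local Notation psi := (psi cp dp cl dl).

Lemma Gmul_psi x y : Gmul (psi x) (psi y) = psi (qmul x y).
Proof. by rewrite /Gmul /psi /= (psi_comp_mul hp) (psi_comp_mul hl). Qed.

Lemma Geq_psi_qscal n : n != 0 -> Geq (psi (qscal n)) (Gone Kp Kl).
Proof.
move=> n0; exists n%:~R, n%:~R.
by rewrite !intr_eq0_pchar0 // n0 /psi /Gone /= !psi_comp_qscal.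
Qed.

Lemma Geq_Ginv_psi g x : qnorm2 x != 0 -> Geq g (psi x) -> Geq (Ginv g) (psi (qconj x)).
Proof.
move=> N0 [a [b [a0 [b0 [e1 e2]]]]].
have Np0 : (qnorm2 x)%:~R != 0 :> Kp by rewrite intr_eq0_pchar0.
have Nl0 : (qnorm2 x)%:~R != 0 :> Kl by rewrite intr_eq0_pchar0.
exists (a^-1 * (qnorm2 x)%:~R^-1), (b^-1 * (qnorm2 x)%:~R^-1).
rewrite !mulf_neq0 ?invr_eq0 //.
by rewrite /Ginv /psi /= e1 e2 !invmxZ ?unitmxZ ?unitfE ?psi_comp_unit //
  !invmx_psi_comp // !scalerA.
Qed.

Lemma parallel_of_Gcomm f f' w w' : q0 w != 0 ->
  Geq f (psi w) -> Geq f' (psi w') -> Geq (Gmul f f') (Gmul f' f) -> parallel w w'.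
Proof.
move=> w0 [a [_ [a0 [_ [e1 _]]]]] [a' [_ [a0' [_ [e1' _]]]]] [b [_ [_ [_ [e _]]]]].
move: e; rewrite /Gmul /= e1 e1' !scalemx_mul -!(psi_comp_mul hp) scalerA.
by move/(scaler_eq_div (mulf_neq0 a0 a0')) => e; exact: (parallel_of_psi_comm hKp hp w0 e).
Qed.

Lemma parallel_of_Gconj g h x y z : qnorm2 x != 0 -> q0 x != 0 -> ~~ real_quat z ->
  parallel y z -> Geq g (psi x) -> Geq h (psi y) ->
  Geq (Gmul (Gmul g h) (Ginv g)) (psi z) -> parallel x z.
Proof.
move=> N0 x0 nz yz [a [_ [a0 [_ [gx _]]]]] [b [_ [b0 [_ [hy _]]]]] [k [_ [k0 [_ [e _]]]]].
have g_unit : g.1 \in unitmx.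
  by rewrite gx unitmxZ ?unitfE ?psi_comp_unit ?intr_eq0_pchar0.
have : g.1 *m h.1 = (g.1 *m h.1 *m invmx g.1) *m g.1 by rewrite mulmxKV.
move: e; rewrite /Gmul /Ginv /= => ->; rewrite gx hy !scalemx_mul -!(psi_comp_mul hp).
move/(scaler_eq_div (mulf_neq0 a0 b0)) => e.
apply: (parallel_of_psi_conj hKp hp x0 _ nz yz e).
by rewrite mulf_neq0 ?invr_eq0 ?mulf_neq0.
Qed.

End PsiGamma.

Section GammaParallel.
Variables (p l : nat) (Kp Kl : fieldType) (cp dp : Kp) (cl dl : Kl) (z : quat).

Definition Gamma_parallel (f : Grep Kp Kl) : Prop :=
  exists x, [/\ in_GammaTilde p l x, Geq f (psi cp dp cl dl x) & parallel x z].

Hypotheses (op : odd p) (ol : odd l) (p0 : (0 < p)%N) (l0 : (0 < l)%N).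
Hypotheses (hKp : [pchar Kp] =i pred0) (hKl : [pchar Kl] =i pred0).
Hypotheses (hp : cp ^+ 2 + dp ^+ 2 + 1 = 0) (hl : cl ^+ 2 + dl ^+ 2 + 1 = 0).
Hypothesis nz : ~~ real_quat z.

Lemma Gamma_parallel_subgroup :
  is_subgroup_in (in_Gamma p l cp dp cl dl) Gamma_parallel.
Proof.
split; [|split; [|split; [|split]]].
- by move=> f f' ff' [x [Gx f'x xz]]; exists x; split=> //; apply: Geq_trans ff' f'x.
- by move=> f [x [Gx fx _]]; exists x.
- exists (qscal 1); split; [exact: GammaTilde_one | | exact: parallel_qscal].
  by apply/Geq_sym/Geq_psi_qscal.
- move=> f f' [x [Gx fx xz]] [y [Gy f'y yz]]; exists (qmul x y); split.
  + exact: GammaTilde_mul.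
  + by rewrite -(Gmul_psi hp hl); apply: Geq_mul.
  + exact: parallel_mul.
- move=> f [x [Gx fx xz]]; exists (qconj x); split.
  + exact: GammaTilde_conj.
  + exact: Geq_Ginv_psi (GammaTilde_qnorm2_neq0 p0 l0 Gx) fx.
  + exact: parallel_conj.
Qed.

Lemma Gamma_parallel_abelian : is_abelian Gamma_parallel.
Proof.
move=> f f' [x [_ fx xz]] [y [_ f'y yz]].
have xy := parallel_trans nz xz (parallel_sym yz).
apply: Geq_trans (Geq_mul fx f'y) _.
rewrite (Gmul_psi hp hl) qmulC_parallel // -(Gmul_psi hp hl).
exact/Geq_sym/Geq_mul.
Qed.

End GammaParallel.

Unset Implicit Arguments.
Set Strict Implicit.

Theorem proposition2p6 (p l : nat) (Kp Kl : fieldType)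
  (cp dp : Kp) (cl dl : Kl) :
  prime p -> prime l -> odd p -> odd l -> p != l ->
  [pchar Kp] =i pred0 -> [pchar Kl] =i pred0 ->
  cp ^+ 2 + dp ^+ 2 + 1 = 0 -> cl ^+ 2 + dl ^+ 2 + 1 = 0 ->
  is_CSA (in_Gamma p l cp dp cl dl).
Proof.
move=> pp pl op ol _ hKp hKl hp hl H [[_ [H_Gamma _]] [H_ab H_max]] g Gg gNH h Hh Hk.
have [p0 l0] := (prime_gt0 pp, prime_gt0 pl).
have q0_neq0 x : in_GammaTilde p l x -> q0 x != 0.
  by move/(GammaTilde_admissible op ol)/admissible_q0_neq0.
have [z [Gz kz]] := H_Gamma _ Hk.
have [rz|nrz] := boolP (real_quat z).
  apply: Geq_trans kz _; rewrite (real_quatE rz).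
  exact: (Geq_psi_qscal hKp hKl (q0_neq0 _ Gz)).
have H_par f : H f -> Gamma_parallel p l cp dp cl dl z f.
  move=> Hf; have [w [Gw fw]] := H_Gamma _ Hf; exists w; split=> //.
  exact: (parallel_of_Gcomm hKp hp (q0_neq0 _ Gw) fw kz (H_ab _ _ Hf Hk)).
have [x [Gx gx]] := Gg; have [y [_ hy yz]] := H_par _ Hh.
case: gNH; apply: (H_max _ (Gamma_parallel_subgroup op ol p0 l0 hKp hKl hp hl nrz)
  (Gamma_parallel_abelian hp hl nrz) H_par).
exists x; split=> //.
exact: (parallel_of_Gconj hKp hp (GammaTilde_qnorm2_neq0 p0 l0 Gx) (q0_neq0 _ Gx) nrz yz gx hy kz).
Qed.
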